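(* Let $K_1\subsetneq K_2$ be fields and $R=K_1+xK_2[x]$ (polynomials over $K_2$ with constant term in $K_1$). Then $R$ is atomic, for every $a\in K_2\setminus\{0\}$ the element $ax$ is irreducible in $R$ but not absolutely irreducible, $R$ has prime elements, and every absolutely irreducible element of $R$ is prime.
   Context: For an integral domain $R$, factorization notions refer to the monoid $(R\setminus\{0\},\cdot)$. $R$ is atomic if every non-zero non-unit is a product of irreducibles. Two factorizations into irreducibles $a_1\cdots a_n=b_1\cdots b_m$ of the same element are essentially the same if $n=m$ and, after re-indexing, $a_j$ and $b_j$ are associated for all $j$. An irreducible $r$ is absolutely irreducible if for every $n\in\mathbb N$, every factorization of $r^n$ into irreducibles is essentially the same as $r^n=r\cdots r$. *)

From HB Require Import structures.
From mathcomp Require Import all_boot all_order all_algebra.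
Set Implicit Arguments. Unset Strict Implicit. Unset Printing Implicit Defensive.
Import Order.TTheory GRing.Theory.
Local Open Scope ring_scope.

(* The ring R = K1 + x K2[x] is modelled as the subset of {poly K2}
   consisting of the polynomials whose constant term lies in K1. *)
Section FactR.
Variables (K2 : fieldType) (K1 : {pred K2}).

Definition memR (p : {poly K2}) : Prop := p`_0 \in K1.

Definition unitR (u : {poly K2}) : Prop :=
  memR u /\ exists v, memR v /\ u * v = 1.

Definition assocR (a b : {poly K2}) : Prop :=
  exists u, unitR u /\ a = u * b.

Definition dvdR (a b : {poly K2}) : Prop :=
  exists c, memR c /\ b = a * c.

Definition irrR (r : {poly K2}) : Prop :=
  [/\ memR r, r != 0, ~ unitR r &
      forall a b, memR a -> memR b -> r = a * b -> unitR a \/ unitR b].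

Definition primeR (p : {poly K2}) : Prop :=
  [/\ memR p, p != 0, ~ unitR p &
      forall a b, memR a -> memR b -> dvdR p (a * b) -> dvdR p a \/ dvdR p b].

Definition irr_seqR (s : seq {poly K2}) : Prop :=
  forall q, q \in s -> irrR q.

Definition atomicR : Prop :=
  forall r, memR r -> r != 0 -> ~ unitR r ->
    exists s, irr_seqR s /\ r = \prod_(q <- s) q.

Definition ess_sameR (s t : seq {poly K2}) : Prop :=
  exists t', perm_eq t t' /\ size s = size t' /\
    forall i, (i < size s)%N -> assocR (nth 0 s i) (nth 0 t' i).

Definition abs_irrR (r : {poly K2}) : Prop :=
  irrR r /\
  forall (n : nat) (s : seq {poly K2}),
    irr_seqR s -> \prod_(q <- s) q = r ^+ n -> ess_sameR s (nseq n r).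
End FactR.

From HB Require Import structures.
From mathcomp Require Import all_boot all_order all_algebra.
From mathcomp Require Import zify.
From Stdlib Require Import Classical.
Set Implicit Arguments. Unset Strict Implicit. Unset Printing Implicit Defensive.
Import GRing.Theory.
Local Open Scope ring_scope.

(* The units of R are the nonzero constants in K1, so a nonunit of R has
   positive degree and induction on the degree gives atomicity.  Rescaling a
   factor by its constant term shows that an irreducible of R is irreducible
   in K2[x]; if its constant term is nonzero, divisibility by it in K2[x]
   descends to R, so it is prime in R.  For b outside K1 the factorization
   (ax)^2 = (abx)(ab^-1x) is not essentially (ax)(ax), and an irreducible with
   zero constant term is of the form cx, so absolutely irreducible elements
   have nonzero constant term and are prime. *)

Lemma irredp_dvdp_mul (F : fieldType) (p a b : {poly F}) :
  irreducible_poly p -> p %| a * b -> (p %| a) || (p %| b).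
Proof.
move=> irr_p pab; have [//|pNa] /= := boolP (p %| a).
by rewrite -(@Gauss_dvdpr _ b a) // irreducible_poly_coprime.
Qed.

Section FactorizationR.
Variables (K2 : fieldType) (K1 : divringClosed K2).

Lemma unitRP u : unitR K1 u <-> memR K1 u /\ size u = 1%N.
Proof.
split=> [[u_R [v [_ uv]]] | [u_R /eqP/size_poly1P[c c0 Du]]].
  split=> //; have : u \is a GRing.unit by apply/unitrPr; exists v.
  by rewrite poly_unitE => /andP[/eqP].
split=> //; exists c^-1%:P; split; last by rewrite Du -polyCM mulfV.
by move: u_R; rewrite /memR Du !coefC /= rpredV.
Qed.

Lemma nonunitR_size_gt1 a :
  memR K1 a -> a != 0 -> ~ unitR K1 a -> (1 < size a)%N.
Proof.
move=> a_R a0 aNU; rewrite ltn_neqAle eq_sym size_poly_gt0 a0 andbT.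
by apply/eqP => a1; apply: aNU; apply/unitRP.
Qed.

Lemma size2_irrR r : memR K1 r -> size r = 2%N -> irrR K1 r.
Proof.
move=> r_R r2; have r0 : r != 0 by rewrite -size_poly_eq0 r2.
split=> // [/unitRP[_]|a b a_R b_R Dr]; first by rewrite r2.
have : a * b != 0 by rewrite -Dr.
rewrite mulf_eq0 negb_or => /andP[a0 b0].
have := size_mul a0 b0; rewrite -Dr r2 -subn1 => sizes.
have := size_poly_gt0 a; have := size_poly_gt0 b; rewrite a0 b0 => b_gt0 a_gt0.
have [a1|a1] := eqVneq (size a) 1%N; [left|right]; apply/unitRP; split=> //.
(* lia does not identify differently elaborated occurrences of [size a]. *)
move: (size a) (size b) sizes a1 a_gt0 b_gt0 => x y *; lia.
Qed.

Lemma scaleX_memR a : memR K1 (a *: 'X).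
Proof. by rewrite /memR coefZ coefX mulr0 rpred0. Qed.

Lemma scaleX_irrR a : a != 0 -> irrR K1 (a *: 'X).
Proof.
move=> a0; apply: size2_irrR; first exact: scaleX_memR.
by rewrite size_scale // size_polyX.
Qed.

Lemma scaleX_not_abs_irrR a b : a != 0 -> b \notin K1 -> ~ abs_irrR K1 (a *: 'X).
Proof.
move=> a0 bNK [_ abs_aX].
have b0 : b != 0 by apply: contraNneq bNK => ->; apply: rpred0.
pose s := [:: (a * b) *: 'X; (a / b) *: 'X].
have s_irr : irr_seqR K1 s.
  by move=> q; rewrite !inE => /orP[]/eqP->; apply: scaleX_irrR;
    rewrite ?mulf_neq0 ?invr_eq0.
have prod_s : \prod_(q <- s) q = (a *: 'X) ^+ 2.
  rewrite !big_cons big_nil mulr1 expr2 -!scalerAl -!scalerAr !scalerA.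
  by rewrite mulrACA mulfV // mulr1.
have [t [perm_t [_ assoc_st]]] := abs_aX 2%N s s_irr prod_s.
have t0 : nth 0 t 0 = a *: 'X.
  have : nth 0 t 0 \in t by rewrite mem_nth // -(perm_size perm_t).
  by rewrite -(perm_mem perm_t) mem_nseq => /andP[_ /eqP].
have [u [u_unit]] := assoc_st 0%N isT; rewrite t0 /=.
have [u_R /eqP/size_poly1P[c _ Du]] := proj1 (unitRP u) u_unit.
rewrite Du mul_polyC scalerA => /(congr1 (fun p : {poly K2} => p`_1)).
rewrite !coefZ coefX /= !mulr1 mulrC => /(mulIf a0) bc.
by move: u_R; rewrite /memR Du coefC -bc (negPf bNK).
Qed.

Lemma irrR_factor_size r q s :
  irrR K1 r -> r = q * s -> size q = 1%N \/ size s = 1%N.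
Proof.
move=> [r_R _ _ r_irr] Dr.
have unit_size1 p : unitR K1 p -> size p = 1%N by case/unitRP.
have normal_factor q' s' : r = q' * s' -> q'`_0 != 0 ->
    size q' = 1%N \/ size s' = 1%N.
  move=> Dr' q0; have [] := r_irr ((q'`_0)^-1 *: q') (q'`_0 *: s').
  - by rewrite /memR coefZ mulVf ?rpred1.
  - by rewrite /memR coefZ -coef0M -Dr'.
  - by rewrite -scalerAl -scalerAr scalerA mulVf // scale1r.
  - by move/unit_size1; rewrite size_scale ?invr_eq0 //; left.
  - by move/unit_size1; rewrite size_scale //; right.
have [q0 | /(normal_factor _ _ Dr)//] := eqVneq q`_0 0.
have [s0 | s0] := eqVneq s`_0 0.
  have [] := r_irr q s; rewrite /memR ?q0 ?s0 ?rpred0 // => /unit_size1 ?;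
    by [left | right].
by rewrite mulrC in Dr; have [] := normal_factor _ _ Dr s0; [right|left].
Qed.

Lemma irrR_irreducible_poly r : irrR K1 r -> irreducible_poly r.
Proof.
move=> r_irr; have [r_R r0 rNU _] := r_irr.
split=> [|d d1 /dvdpP[c Dr]]; first exact: nonunitR_size_gt1.
have [/eqP/size_poly1P[k k0 Dc] | d1'] := irrR_factor_size r_irr Dr.
  by rewrite -dvdp_size_eqp Dr Dc ?size_Cmul ?dvdp_mull.
by rewrite d1' in d1.
Qed.

Lemma dvdp_dvdR r a :
  memR K1 r -> r`_0 != 0 -> memR K1 a -> r %| a -> dvdR K1 r a.
Proof.
move=> r_R r0 a_R /dvdpP[c Da]; exists c; split; last by rewrite mulrC.
rewrite /memR; have -> : c`_0 = a`_0 / r`_0 by rewrite Da coef0M mulfK.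
exact: rpred_div.
Qed.

Lemma irrR_primeR r : irrR K1 r -> r`_0 != 0 -> primeR K1 r.
Proof.
move=> r_irr r0; have [r_R rn0 rNU _] := r_irr.
split=> // a b a_R b_R [c [_ Dab]].
have : r %| a * b by rewrite Dab dvdp_mulIl.
case/(irredp_dvdp_mul (irrR_irreducible_poly r_irr))/orP => r_dvd;
  [left|right]; exact: dvdp_dvdR.
Qed.

Lemma abs_irrR_coef0 b r : b \notin K1 -> abs_irrR K1 r -> r`_0 != 0.
Proof.
move=> bNK r_abs; apply/eqP => r0.
have : root r 0 by rewrite /root horner_coef0 r0.
case/factor_theorem => d; rewrite subr0 => Dr.
have [/eqP/size_poly1P[c c0 Dd] | ] := irrR_factor_size r_abs.1 Dr.
  by apply: (scaleX_not_abs_irrR c0 bNK); rewrite -mul_polyC -Dd -Dr.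
by rewrite size_polyX.
Qed.

Lemma not_irrR_split r : memR K1 r -> r != 0 -> ~ unitR K1 r -> ~ irrR K1 r ->
  exists a b, [/\ memR K1 a, memR K1 b, ~ unitR K1 a, ~ unitR K1 b & r = a * b].
Proof.
move=> r_R r0 rNU rNirr; apply: NNPP => no_split; apply: rNirr.
split=> // a b a_R b_R Dr; apply: NNPP => /not_or_and[aNU bNU].
by apply: no_split; exists a, b.
Qed.

Lemma atomicR_poly : atomicR K1.
Proof.
move=> r; have [n] := ubnP (size r); elim: n r => // n IHn r lt_rn r_R r0 rNU.
have [r_irr | ] := classic (irrR K1 r).
  by exists [:: r]; split; [move=> q; rewrite inE => /eqP-> | rewrite big_seq1].
case/(not_irrR_split r_R r0 rNU) => a [b [a_R b_R aNU bNU Dr]].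
have : a * b != 0 by rewrite -Dr.
rewrite mulf_eq0 negb_or => /andP[a0 b0].
have a1 := nonunitR_size_gt1 a_R a0 aNU; have b1 := nonunitR_size_gt1 b_R b0 bNU.
have := size_mul a0 b0; rewrite -Dr -subn1 => size_r.
have [lt_an lt_bn] : (size a < n)%N /\ (size b < n)%N.
  by move: (size a) (size b) (size r) a1 b1 size_r lt_rn => x y z *; lia.
rewrite Dr; have [sa [sa_irr ->]] := IHn a lt_an a_R a0 aNU.
have [sb [sb_irr ->]] := IHn b lt_bn b_R b0 bNU.
exists (sa ++ sb); split; last by rewrite big_cat.
by move=> q; rewrite mem_cat => /orP[]; [apply: sa_irr | apply: sb_irr].
Qed.

End FactorizationR.

Theorem mainTheorem6 (K2 : fieldType) (K1 : divringClosed K2)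
  (properK : exists a : K2, a \notin K1) :
  [/\ atomicR K1,
      (forall a : K2, a != 0 ->
         irrR K1 (a *: 'X) /\ ~ abs_irrR K1 (a *: 'X)),
      (exists p : {poly K2}, primeR K1 p) &
      (forall r : {poly K2}, abs_irrR K1 r -> primeR K1 r)].
Proof.
have [b bNK] := properK; split.
- exact: atomicR_poly.
- by move=> a a0; split; [exact: scaleX_irrR | exact: scaleX_not_abs_irrR bNK].
- exists ('X - 1%:P); apply: irrR_primeR.
    apply: size2_irrR (size_XsubC _).
    by rewrite /memR coefB coefX coefC /= sub0r rpredN rpred1.
  by rewrite coefB coefX coefC sub0r oppr_eq0 oner_eq0.
- by move=> r r_abs; apply: irrR_primeR r_abs.1 _; apply: abs_irrR_coef0 bNK r_abs.
Qed.
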